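(* Let $F\colon X\to 2^Y$ be a generalized tri-quotient map. Then the map $\Phi\colon 2^X\to 2^Y$, $\Phi(A)=\mathrm{cl}_Y(F(A))$ where $F(A)=\bigcup\{F(x):x\in A\}$, is monotone and set tri-quotient (with $\mathcal{S}(X)=2^X$).
   Context: All spaces are completely regular; $2^X$ denotes the family of subsets of $X$ and $\mathcal{T}(X)$ the topology of $X$. A set-valued map $F\colon X\to 2^Y$ is generalized tri-quotient if to each open $U\subset X$ one can assign an open $t(U)\subset Y$ such that: $t(U)\subset F(U)$; $t(X)=Y$; $U\subset V$ implies $t(U)\subset t(V)$; if $y\in t(U)$ and $\mathcal{W}$ is a cover of $F^{-1}(y)\cap U$ by open subsets of $X$ (where $F^{-1}(y)=\{x\in X:y\in F(x)\}$), then $y\in t(\bigcup\mathcal{E})$ for some finite $\mathcal{E}\subset\mathcal{W}$. For $\mathcal{S}(X)\subset 2^X$, a map $\Phi\colon\mathcal{S}(X)\to 2^Y$ is monotone if $K\subset L$ implies $\Phi(K)\subset\Phi(L)$; it is set tri-quotient if there is a map $s\colon\mathcal{T}(X)\to\mathcal{T}(Y)$ such that: (str1) $s(U)\subset\bigcup\{\Phi(K):K\in\mathcal{S}(X),\ K\subset U\}$; (str2) $s(X)=Y$; (str3) $U\subset V$ implies $s(U)\subset s(V)$; (str4) if $y\in s(U)$ and $\mathcal{W}$ is a cover of $\bigcup\{K\in \Phi^{-1}(y):K\subset U\}$ by open subsets of $X$, then $y\in s(\bigcup\mathcal{E})$ for some finite $\mathcal{E}\subset\mathcal{W}$; here $\Phi^{-1}(y)=\{K\in\mathcal{S}(X):y\in\Phi(K)\}$.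 *)

From HB Require Import structures.
From mathcomp Require Import all_boot all_order.
From mathcomp Require Import all_classical topology.
Set Implicit Arguments. Unset Strict Implicit. Unset Printing Implicit Defensive.
Local Open Scope classical_set_scope.

Definition open_cover_of {X : topologicalType} (W : set (set X)) (A : set X) :=
  (forall V, W V -> open V) /\ A `<=` \bigcup_(V in W) V.

Definition preimg {X Y : Type} (F : X -> set Y) (y : Y) : set X :=
  [set x | F x y].

Definition gen_tri_quotient {X Y : topologicalType} (F : X -> set Y) :=
  exists t : set X -> set Y,
    [/\ (forall U, open U -> open (t U)),
        (forall U, open U -> t U `<=` \bigcup_(x in U) F x),
        t setT = setT,
        (forall U V, open U -> open V -> U `<=` V -> t U `<=` t V) &
        (forall U y W, open U -> t U y -> open_cover_of W (preimg F y `&` U) ->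
           exists E : set (set X),
             [/\ finite_set E, E `<=` W & t (\bigcup_(e in E) e) y])].

Definition img_set {X Y : Type} (F : X -> set Y) (A : set X) : set Y :=
  \bigcup_(x in A) F x.

Definition monotone_setmap {X Y : Type} (S : set (set X)) (Phi : set X -> set Y) :=
  forall K L, S K -> S L -> K `<=` L -> Phi K `<=` Phi L.

Definition set_preimg {X Y : Type} (S : set (set X)) (Phi : set X -> set Y) (y : Y)
  : set (set X) := [set K | S K /\ Phi K y].

Definition set_tri_quotient {X Y : topologicalType} (S : set (set X))
    (Phi : set X -> set Y) :=
  exists s : set X -> set Y,
    [/\ (forall U, open U -> open (s U)),
        (forall U, open U ->
           s U `<=` \bigcup_(K in [set K | S K /\ K `<=` U]) Phi K),
        s setT = setT,
        (forall U V, open U -> open V -> U `<=` V -> s U `<=` s V) &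
        (forall U y W, open U -> s U y ->
           open_cover_of W (\bigcup_(K in [set K | set_preimg S Phi y K /\ K `<=` U]) K) ->
           exists E : set (set X),
             [/\ finite_set E, E `<=` W & s (\bigcup_(e in E) e) y])].

From HB Require Import structures.
From mathcomp Require Import all_boot all_order.
From mathcomp Require Import all_classical topology.
Local Open Scope classical_set_scope.

(* The assignment [t] witnessing that [F] is generalized tri-quotient also
   witnesses that [A |-> cl (F A)] is set tri-quotient: for (str1) take [K = U],
   and for (str4) note that every [x] in [F^-1(y) & U] gives the member [[set x]]
   of the family to be covered, so a cover of that family covers [F^-1(y) & U]. *)

Lemma img_set_subset {X Y : Type} (F : X -> set Y) (A B : set X) :
  A `<=` B -> img_set F A `<=` img_set F B.
Proof. by move=> AB y [x Ax Fxy]; exists x => //; exact: AB. Qed.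

Section ClosureImage.
Context {X Y : topologicalType} (F : X -> set Y).

Let Phi (A : set X) : set Y := closure (img_set F A).

Lemma closure_img_set_monotone : monotone_setmap setT Phi.
Proof. by move=> K L _ _ KL; apply/closureS/img_set_subset. Qed.

Lemma img_set_sub_bigcup_closure (U : set X) :
  img_set F U `<=` \bigcup_(K in [set K | setT K /\ K `<=` U]) Phi K.
Proof. by move=> y FUy; exists U; [split | exact: subset_closure]. Qed.

Lemma preimg_sub_bigcup_set_preimg (U : set X) (y : Y) :
  preimg F y `&` U `<=`
    \bigcup_(K in [set K | set_preimg setT Phi y K /\ K `<=` U]) K.
Proof.
move=> x [Fxy Ux]; exists [set x] => //; split; last by move=> z ->.
by split => //; rewrite /Phi; apply: subset_closure; exists x.
Qed.

End ClosureImage.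

Theorem lemma2p1 (X Y : topologicalType) (F : X -> set Y) :
  gen_tri_quotient F ->
  let Phi := fun A : set X => closure (img_set F A) in
  monotone_setmap setT Phi /\ set_tri_quotient setT Phi.
Proof.
move=> [t [t_open t_sub t_setT t_monotone t_cover]] Phi.
split; first exact: closure_img_set_monotone.
exists t; split => //.
- by move=> U oU y /(t_sub U oU) /img_set_sub_bigcup_closure.
- move=> U y W oU tUy [W_open W_cover]; apply: (t_cover U y W oU tUy); split => //.
  exact: subset_trans (preimg_sub_bigcup_set_preimg F U y) W_cover.
Qed.
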